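(* In the homogeneous UAV Persistent Service model ($g_i=g$ for all $i$, $2g<f$), run HoRR with $M=N+\lceil \frac{c+2g}{f-2g}N\rceil$ UAVs and let $x=\frac{f-2g}{N}$. Label the locations $1,\dots,N$ so that the UAV placed at location $i$ at time $0$ is the one relieved at time $ix$. Then, for every $k\ge 1$, the UAV initially placed at location $i$ is instructed to go recharge for the $k$-th time at time $$t_i^k=\left(i+(k-1)N+(k-1)\left\lceil\frac{2g+c}{x}\right\rceil\right)x .$$
   Context: UAV Persistent Service model: single recharging station (RS), finite set $\mathcal N$ of $N$ aerial locations, identical UAVs with maximum flight time $f>0$ on a full battery and recharge/battery-swap time $c\ge0$ at the RS; flying between RS and any location takes $g>0$ time units (homogeneous case), with $2g<f$. A UAV covers a location while it is present there. HoRR schedule: with $x=\frac{f-2g}{N}$, at time $0$ one fully charged UAV is at each location and the remaining (backup) UAVs are fully charged at the RS. For each $k=1,2,\dots$, a fully charged backup departs the RS at time $kx-g$ and at time $kx$ replaces the serving UAV with least remaining energy (ties broken arbitrarily); the relieved UAV (''instructed to recharge'' at time $kx$) flies back to the RS (arriving at $kx+g$), recharges for $c$ time units, and then becomes a backup. Backups are dispatched in the order in which they became ready, so a UAV ready at the RS at time $s$ performs the first replacement at a time $jx$ ($j\in\mathbb N$) with $jx\ge s+g$ not already assigned to an earlier-ready backup. *)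

From mathcomp Require Import all_boot all_order all_algebra.
Set Implicit Arguments. Unset Strict Implicit. Unset Printing Implicit Defensive.
Import Order.TTheory GRing.Theory Num.Theory.
Local Open Scope ring_scope.

(* Locations : 'I_N (location label i+1 in the paper corresponds to i : 'I_N).
   A run of HoRR is described by
     u0  : 'I_N -> 'I_M   UAV placed at each location at time 0,
     b k : 'I_M           backup departing at k*x - g and arriving at k*x (k >= 1),
     loc k : 'I_N         location where the replacement at time k*x happens (k >= 1).
   Everything else (who serves where, who is relieved, readiness) is derived. *)

Section HoRR.
Variables (R : archiRealFieldType) (N M : nat) (f g c : R).
Variables (u0 : 'I_N -> 'I_M) (b : nat -> 'I_M) (loc : nat -> 'I_N).

Definition xstep : R := (f - 2 * g) / N%:R.

(* step at which the UAV currently serving location l (after the first k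
   replacements) was placed there; 0 = initial placement at time 0 *)
Fixpoint placed (k : nat) (l : 'I_N) : nat :=
  match k with
  | 0 => 0%N
  | k'.+1 => if l == loc k then k else placed k' l
  end.

Fixpoint serving (k : nat) (l : 'I_N) : 'I_M :=
  match k with
  | 0 => u0 l
  | k'.+1 => if l == loc k then b k else serving k' l
  end.

(* UAV relieved ("instructed to recharge") at time k*x, k >= 1 *)
Definition relieved (k : nat) : 'I_M := serving k.-1 (loc k).

(* remaining energy at time t of a UAV placed at step j (j = 0: fully charged
   at its location at time 0; j >= 1: left the RS fully charged at j*x - g) *)
Definition energy (j : nat) (t : R) : R :=
  if j == 0%N then f - t else f - (t - (j%:R * xstep - g)).

Inductive status := Serving | ReadyAt of R.

(* status of UAV u after the first k replacements: serving a location, or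
   (being / going to be) a fully charged backup at the RS from time s on *)
Fixpoint status_of (k : nat) (u : 'I_M) : status :=
  match k with
  | 0 => if u \in codom u0 then Serving else ReadyAt 0
  | k'.+1 => if u == b k then Serving
             else if u == relieved k then ReadyAt (k%:R * xstep + g + c)
             else status_of k' u
  end.

(* The run (u0, b, loc) follows the HoRR rules:
   - one distinct UAV at each location at time 0, the others are backups;
   - at each step k >= 1 the departing backup b k is ready at the RS by the
     departure time k*x - g, and backups are dispatched in the order in which
     they became ready (FIFO, ties arbitrary);
   - the replaced UAV is a serving UAV with least remaining energy at time k*x
     (ties arbitrary). *)
Definition HoRR_run : Prop :=
  injective u0 /\
  forall k : nat, (0 < k)%N ->
    (exists s : R, status_of k.-1 (b k) = ReadyAt s /\
        s <= k%:R * xstep - g /\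
        forall (u : 'I_M) (s' : R), status_of k.-1 u = ReadyAt s' -> s <= s') /\
    (forall l : 'I_N,
        energy (placed k.-1 (loc k)) (k%:R * xstep)
          <= energy (placed k.-1 l) (k%:R * xstep)).

Definition nb_relief (u : 'I_M) (T : nat) : nat :=
  \sum_(1 <= j < T.+1) (relieved j == u).

End HoRR.

From mathcomp Require Import all_boot all_order all_algebra.
From mathcomp Require Import zify lra.
Import Order.TTheory GRing.Theory Num.Theory.
Set Implicit Arguments. Unset Strict Implicit. Unset Printing Implicit Defensive.

(* Let D := M - N be the number of initial backups.  By strong induction on the
   step m, HoRR is forced into a rigid pattern: the m-th replacement happens at
   location (m - 1) mod N and relieves the UAV placed at step m - N, and the
   backup dispatched at step m is a never used initial backup if m <= D and,
   by the FIFO rule, the UAV relieved at step m - D otherwise.  Hence the UAV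
   relieved at step j is the one relieved at step j - (N + D), so the UAV
   initially at location i is relieved exactly at the steps i + 1 + K (N + D);
   finally D = ceil((2g + c)/x). *)

Lemma eq_modn_window P a b : a <= b -> b < a + P -> a = b %[mod P] -> a = b.
Proof.
move=> le_ab lt_b eq_ab; have := eqn_modDl a 0 (b - a) P.
rewrite addn0 subnKC // -eq_ab eqxx mod0n modn_small; last lia.
by move/esym/eqP; lia.
Qed.

Lemma sum_eq_modn P i n : i < P ->
  \sum_(0 <= j < i.+1 + n * P) (j %% P == i) = n.+1.
Proof.
move=> iP; elim: n => [|n IHn].
  rewrite mul0n addn0 big_nat_recr //= modn_small // eqxx.
  rewrite big_nat_cond big1 // => j /andP[/andP[_ lt_ji] _].
  by rewrite modn_small ?(ltn_eqF lt_ji) //; lia.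
have last_hit : i.+1 + n.+1 * P = (n.+1 * P + i).+1 by rewrite mulSn; lia.
rewrite (big_cat_nat (n := i.+1 + n * P)) /= ?IHn; [|lia|rewrite mulSn; lia].
rewrite last_hit big_nat_recr /=; last by rewrite mulSn; lia.
rewrite modnMDl modn_small // eqxx big_nat_cond big1; first lia.
move=> j /andP[/andP[lo hi] _]; case: eqP => // jP; exfalso.
have: j = n.+1 * P + i.
  apply: (@eq_modn_window P); first lia; first by rewrite mulSn; lia.
  by rewrite modnMDl jP modn_small.
lia.
Qed.

Section HoRRSchedule.
Variables (R : archiRealFieldType) (N D : nat) (f g c : R).
Variables (u0 : 'I_N -> 'I_(N + D)) (b : nat -> 'I_(N + D)) (loc : nat -> 'I_N).

Local Notation x := (xstep N f g).
Local Notation status := (status_of f g c u0 b loc).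
Local Notation srv := (serving u0 b loc).
Local Notation rel := (relieved u0 b loc).
Local Notation pl := (placed loc).

Hypothesis run : HoRR_run f g c u0 b loc.
Hypothesis g_gt0 : (0 < g)%R.
Hypothesis c_ge0 : (0 <= c)%R.
Hypothesis x_gt0 : (0 < x)%R.
Hypothesis relieved_initial : forall i : 'I_N, rel i.+1 = u0 i.

Definition relief_ready (j : nat) : R := (j%:R * x + g + c)%R.

Definition ready_time (m : nat) : R :=
  if m <= D then 0%R else relief_ready (m - D).

Lemma relief_ready_gt0 j : (0 < relief_ready j)%R.
Proof. by rewrite /relief_ready -addrA ltr_wpDl ?ltr_wpDr // mulr_ge0 // ltW. Qed.

Lemma ler_relief_ready i j : (relief_ready i <= relief_ready j)%R = (i <= j).
Proof. by rewrite /relief_ready !lerD2r ler_pM2r // ler_nat. Qed.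

Lemma relief_ready_inj : injective relief_ready.
Proof.
by move=> i j eq_ij; apply/eqP; rewrite eqn_leq -!ler_relief_ready eq_ij lexx.
Qed.

Lemma ler_energy i j t : 0 < i -> 0 < j ->
  (energy N f g i t <= energy N f g j t)%R = (i <= j).
Proof.
case: i j => [|i] [|j] // _ _.
by rewrite /energy /= lerD2l !lerN2 lerD2l lerN2 lerD2r ler_pM2r // ler_nat.
Qed.

Lemma u0_inj : injective u0.
Proof. by case: run. Qed.

Lemma dispatch_first_ready k : 0 < k -> exists s,
  status k.-1 (b k) = ReadyAt s /\
  forall u s', status k.-1 u = ReadyAt s' -> (s <= s')%R.
Proof. by case: run => _ /(_ k) run_k /run_k[[s [? [_ ?]]] _]; exists s. Qed.

Lemma relieve_least_energy k l : 0 < k ->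
  (energy N f g (pl k.-1 (loc k)) (k%:R * x) <= energy N f g (pl k.-1 l) (k%:R * x))%R.
Proof. by case: run => _ /(_ k) run_k /run_k[_]. Qed.

Lemma serving_invariant q :
  injective (srv q) /\ forall l, status q (srv q l) = Serving R.
Proof.
elim: q => [|q [srv_inj srv_Serving]].
  by split=> [|l]; rewrite /= ?codom_f //; apply: u0_inj.
have [s [b_ready _]] := dispatch_first_ready (ltn0Sn q).
have b_new l : b q.+1 != srv q l.
  by apply/eqP => eq_b; move: b_ready; rewrite eq_b srv_Serving.
split=> [l1 l2 /=|l /=].
  case: eqVneq => [->|_]; case: eqVneq => [->|_] //.
  - by move=> eq_b; move: (b_new l2); rewrite eq_b eqxx.
  - by move=> eq_b; move: (b_new l1); rewrite eq_b eqxx.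
  - exact: srv_inj.
case: (eqVneq l (loc q.+1)) => [_|ne_l] /=; first by rewrite eqxx.
rewrite eq_sym (negbTE (b_new l)) /relieved /= (inj_eq srv_inj) (negbTE ne_l).
exact: srv_Serving.
Qed.

Lemma status_ReadyAtP q u s : status q u = ReadyAt s ->
  (s = 0%R /\ u \notin codom u0 /\ forall p, 0 < p <= q -> u != b p) \/
  exists2 j, 0 < j <= q &
    [/\ s = relief_ready j, u = rel j & forall p, j < p <= q -> u != b p].
Proof.
elim: q s => [|q IHq] s /=.
  by case: ifP => // u_free [<-]; left; split=> //; split=> // p; lia.
case: eqVneq => // ne_b; case: eqVneq => [-> [<-]|_ /IHq].
  by right; exists q.+1; [lia | split=> // p; lia].
move=> [[-> [u_free not_b]]|[j lt_j [-> u_rel not_b]]]; [left | right; subst u].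
  split=> //; split=> // p p_range; case: (eqVneq p q.+1) => [->|ne_p] //.
  by apply: not_b; lia.
exists j; first lia; split=> // p p_range; case: (eqVneq p q.+1) => [->|ne_p] //.
by apply: not_b; lia.
Qed.

Lemma status_ReadyAt_next q u s :
  status q u = ReadyAt s -> u != b q.+1 -> status q.+1 u = ReadyAt s.
Proof.
move=> u_ready ne_b /=; rewrite (negbTE ne_b).
case: eqVneq => // u_rel; move: u_ready; rewrite u_rel /relieved /=.
by have [_ ->] := serving_invariant q.
Qed.

Lemma status_relieved j : 0 < j -> status j (rel j) = ReadyAt (relief_ready j).
Proof.
case: j => // q _ /=; have [s [b_ready _]] := dispatch_first_ready (ltn0Sn q).
case: eqVneq => [b_rel|_]; last by rewrite eqxx.
by move: b_ready; rewrite /= -b_rel /relieved; have [_ ->] := serving_invariant q.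
Qed.

Lemma status_fresh q u : u \notin codom u0 ->
  (forall p, 0 < p <= q -> u != b p) -> status q u = ReadyAt 0%R.
Proof.
move=> u_free; elim: q => [|q IHq] not_b /=; first by rewrite (negbTE u_free).
apply: status_ReadyAt_next; last by apply: not_b; lia.
by apply: IHq => p p_range; apply: not_b; lia.
Qed.

Lemma card_fresh : #|[pred u | u \notin codom u0]| = D.
Proof.
have := cardC [pred u | u \in codom u0].
have -> : #|[pred u | u \in codom u0]| = #|codom u0| by apply: eq_card.
rewrite card_codom; last exact: u0_inj.
rewrite (eq_card (B := [pred u | u \notin codom u0])) // !card_ord; lia.
Qed.

Lemma servingE q l : srv q l = if pl q l == 0 then u0 l else b (pl q l).
Proof. by elim: q => //= q ->; case: eqP. Qed.

Lemma placed_leq q l : pl q l <= q.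
Proof. by elim: q => //= q IHq; case: eqP => _; lia. Qed.

Lemma loc_placed q l : 0 < pl q l -> loc (pl q l) = l.
Proof. by elim: q => //= q IHq; case: eqP => // ->. Qed.

Lemma placed_loc_geq q p : 0 < p <= q -> p <= pl q (loc p).
Proof.
elim: q => [|q IHq] p_range /=; first lia.
case: eqP => [_|ne_loc]; first lia.
have [eq_p|ne_p] := eqVneq p q.+1; first by rewrite eq_p in ne_loc.
by have := IHq ltac:(lia); lia.
Qed.

Lemma backups_gt0 : 0 < D.
Proof.
have [s [b_ready _]] := dispatch_first_ready (ltn0Sn 0).
rewrite -card_fresh; apply/card_gt0P; exists (b 1); rewrite inE.
by move: b_ready => /=; case: ifP => // /negbT.
Qed.

Lemma fresh_undispatched n : n < D ->
  exists u, u \notin codom u0 /\ forall p, 0 < p <= n -> u != b p.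
Proof.
move=> lt_nD; pose s := [seq b p | p <- iota 1 n].
have : ~~ ([pred u | u \notin codom u0] \subset s).
  apply/negP => /subset_leq_card le_card; have := leq_trans le_card (card_size s).
  by rewrite card_fresh size_map size_iota; lia.
case/subsetPn => u u_free u_notin; exists u; split=> // p p_range.
by apply: contraNneq u_notin => ->; apply: map_f; rewrite mem_iota; lia.
Qed.

Definition dispatch_spec m : Prop :=
  [/\ status m.-1 (b m) = ReadyAt (ready_time m),
      m <= D -> b m \notin codom u0
    & D < m -> b m = rel (m - D)].

Lemma dispatch_spec_fresh n : n < D -> dispatch_spec n.+1.
Proof.
move=> lt_nD; have [u [u_free not_b]] := fresh_undispatched lt_nD.
have [s [b_ready s_min]] := dispatch_first_ready (ltn0Sn n).
have s_le0 := s_min u 0%R (status_fresh u_free not_b).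
rewrite /dispatch_spec /ready_time lt_nD.
case: (status_ReadyAtP b_ready) => [[s0 [b_free _]]|[j _ [sj _ _]]].
  by split=> //; [rewrite b_ready s0 | lia].
by move: s_le0; rewrite sj leNgt relief_ready_gt0.
Qed.

Lemma dispatched_fresh_inj : (forall p, 0 < p <= D -> dispatch_spec p) ->
  forall p q, 0 < p <= D -> 0 < q <= D -> b p = b q -> p = q.
Proof.
move=> IH; have b_new q p : 0 < p < q -> q <= D -> b q != b p.
  move=> p_range le_qD; have [q_ready _ _] := IH q ltac:(lia).
  rewrite /ready_time le_qD in q_ready.
  case: (status_ReadyAtP q_ready) => [[_ [_ not_b]]|[j _ [rj _ _]]].
    by apply: not_b; lia.
  by move/eqP: rj; rewrite eq_sym (gt_eqF (relief_ready_gt0 j)).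
move=> p q p_range q_range eq_b; case: (ltngtP p q) => // lt_pq.
  by have := b_new q p ltac:(lia) ltac:(lia); rewrite eq_b eqxx.
by have := b_new p q ltac:(lia) ltac:(lia); rewrite eq_b eqxx.
Qed.

Lemma fresh_dispatched : (forall p, 0 < p <= D -> dispatch_spec p) ->
  forall u, u \notin codom u0 -> exists2 p, 0 < p <= D & u = b p.
Proof.
move=> IH u u_free; pose s := [seq b p | p <- iota 1 D].
have s_uniq : uniq s.
  rewrite map_inj_in_uniq ?iota_uniq // => p q; rewrite !mem_iota => p_range q_range.
  by apply: (dispatched_fresh_inj IH); lia.
have s_fresh : s \subset [pred u | u \notin codom u0].
  apply/subsetP => v /mapP[p]; rewrite mem_iota => p_range ->.
  by have [_ b_free _] := IH p ltac:(lia); rewrite inE b_free //; lia.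
have card_s : #|s| = #|[pred u | u \notin codom u0]|.
  by rewrite card_fresh (card_uniqP s_uniq) size_map size_iota.
have /(subset_cardP card_s) s_eq := s_fresh.
have /mapP[p] : u \in s by rewrite s_eq.
by rewrite mem_iota => p_range ->; exists p => //; lia.
Qed.

Lemma status_relieved_pending n j : (forall p, 0 < p <= n -> dispatch_spec p) ->
  0 < j <= n -> n < j + D -> status n (rel j) = ReadyAt (relief_ready j).
Proof.
elim: n => [|n IHn] IH j_range lt_n; first lia.
have [->|ne_j] := eqVneq j n.+1; first exact: status_relieved.
have rel_ready : status n (rel j) = ReadyAt (relief_ready j).
  by apply: IHn => [p p_range||]; [apply: IH; lia | lia | lia].
apply: status_ReadyAt_next => //; apply/eqP => rel_b.
have [b_ready _ _] := IH n.+1 ltac:(lia).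
move: b_ready; rewrite /= -rel_b rel_ready /ready_time => -[].
case: ifP => [_ zero_eq|/negbT lt_Dn /esym /relief_ready_inj]; last lia.
by have := relief_ready_gt0 j; rewrite -zero_eq ltxx.
Qed.

Lemma dispatch_spec_recycled n : (forall p, 0 < p <= n -> dispatch_spec p) ->
  D <= n -> dispatch_spec n.+1.
Proof.
move=> IH le_Dn; have D_gt0 := backups_gt0; set j0 := n.+1 - D.
have [s [b_ready s_min]] := dispatch_first_ready (ltn0Sn n).
(* FIFO: the UAV relieved at step j0 is waiting, every fresh backup is gone and
   the UAVs relieved before j0 have left, so only it can be dispatched. *)
have s_le : (s <= relief_ready j0)%R.
  by apply: s_min; apply: status_relieved_pending => //; lia.
case: (status_ReadyAtP b_ready) => [[_ [b_free not_b]]|[j j_range [sj b_rel not_b]]].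
  have [p p_range b_p] := fresh_dispatched (fun p _ => IH p ltac:(lia)) b_free.
  by have := not_b p ltac:(lia); rewrite b_p eqxx.
have le_j : j <= j0 by rewrite -ler_relief_ready -sj.
have eq_j : j = j0.
  case: (ltnP j j0) => [lt_j|]; last lia.
  have [_ _ b_jD] := IH (j + D) ltac:(lia).
  by have := not_b (j + D) ltac:(lia); rewrite b_jD ?addnK -?b_rel ?eqxx //; lia.
rewrite /dispatch_spec /ready_time leqNgt ltnS le_Dn /= -/j0 -eq_j.
by split=> [|//|_]; rewrite ?b_ready ?sj.
Qed.

Lemma HoRR_dispatch m : 0 < m -> dispatch_spec m.
Proof.
elim/ltn_ind: m => -[//|n] IH _.
have {}IH p : 0 < p <= n -> dispatch_spec p by move=> p_range; apply: IH; lia.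
by case: (ltnP n D) => [/dispatch_spec_fresh|/(dispatch_spec_recycled IH)].
Qed.

Definition relief_spec m : Prop :=
  loc m = m.-1 %% N :> nat /\ (N < m -> rel m = b (m - N)).

Lemma placed_recent n l : (forall p, 0 < p <= n -> relief_spec p) ->
  N <= n -> n - N < pl n l.
Proof.
move=> IH le_Nn; have lt_lN := ltn_ord l.
have := divn_eq (n.-1 - l) N; set q := _ %/ N; set r := _ %% N => n_eq.
have lt_rN : r < N by rewrite ltn_mod; lia.
have [loc_nr _] := IH (n - r) ltac:(lia).
have loc_nr_eq : loc (n - r) = l.
  apply: ord_inj; rewrite loc_nr (_ : (n - r).-1 = q * N + l); last lia.
  by rewrite modnMDl modn_small.
by have := placed_loc_geq (q := n) (p := n - r) ltac:(lia); rewrite loc_nr_eq; lia.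
Qed.

Lemma placed_loc_recent n p : (forall p, 0 < p <= n -> relief_spec p) ->
  0 < p <= n -> n < p + N -> pl n (loc p) = p.
Proof.
move=> IH p_range lt_n.
have ge_p := placed_loc_geq p_range; have le_n := placed_leq n (loc p).
have [loc_pl _] := IH (pl n (loc p)) ltac:(lia).
have [loc_p _] := IH p p_range.
rewrite loc_placed in loc_pl; last lia.
suff : p.-1 = (pl n (loc p)).-1 by lia.
by apply: (@eq_modn_window N); [lia | lia | rewrite -loc_p -loc_pl].
Qed.

Lemma relief_spec_initial n : (forall p, 0 < p <= n -> relief_spec p) ->
  n < N -> relief_spec n.+1.
Proof.
move=> IH lt_nN; pose i := Ordinal lt_nN.
have pl_i : pl n i = 0.
  apply/eqP; apply: contraT; rewrite -lt0n => pl_gt0.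
  have pl_le := placed_leq n i; have [loc_pl _] := IH (pl n i) ltac:(lia).
  by rewrite loc_placed // modn_small /= in loc_pl; lia.
have loc_i : loc n.+1 = i.
  have [srv_inj _] := serving_invariant n; apply: srv_inj.
  by rewrite [RHS]servingE pl_i; exact: (relieved_initial i).
by split=> [|?]; [rewrite loc_i /= modn_small | lia].
Qed.

Lemma relief_spec_recycled n : (forall p, 0 < p <= n -> relief_spec p) ->
  N <= n -> relief_spec n.+1.
Proof.
move=> IH le_Nn.
have N_gt0 : 0 < N := leq_ltn_trans (leq0n _) (ltn_ord (loc 0)).
have pl_p0 : pl n (loc (n.+1 - N)) = n.+1 - N by apply: placed_loc_recent => //; lia.
(* The serving UAVs were placed at the last N steps, one per location, and the
   oldest one has the least energy. *)
have pl_n1 : pl n (loc n.+1) = n.+1 - N.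
  have lt_pl := placed_recent (loc n.+1) IH le_Nn.
  have := relieve_least_energy (loc (n.+1 - N)) (ltn0Sn n).
  by rewrite /= pl_p0 ler_energy; lia.
have loc_n1 : loc n.+1 = loc (n.+1 - N) by rewrite -pl_n1 loc_placed // pl_n1; lia.
have [loc_p0 _] := IH (n.+1 - N) ltac:(lia).
split=> [|_].
  by rewrite loc_n1 loc_p0 -[in LHS](modnDr _ N); congr (_ %% _); lia.
by rewrite /relieved /= servingE pl_n1 ifN //; lia.
Qed.

Lemma HoRR_relief m : 0 < m -> relief_spec m.
Proof.
elim/ltn_ind: m => -[//|n] IH _.
have {}IH p : 0 < p <= n -> relief_spec p by move=> p_range; apply: IH; lia.
by case: (ltnP n N) => [/(relief_spec_initial IH)|/(relief_spec_recycled IH)].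
Qed.

Lemma relieved_fresh j : N < j <= N + D -> rel j \notin codom u0.
Proof.
move=> j_range; have [_ rel_j] := @HoRR_relief j ltac:(lia).
have [_ b_free _] := @HoRR_dispatch (j - N) ltac:(lia).
by rewrite rel_j; [apply: b_free | ]; lia.
Qed.

Lemma relieved_periodic j : N + D < j -> rel j = rel (j - (N + D)).
Proof.
move=> lt_j; have [_ rel_j] := @HoRR_relief j ltac:(lia).
have [_ _ b_rel] := @HoRR_dispatch (j - N) ltac:(lia).
rewrite rel_j; last lia.
by rewrite b_rel ?subnDA //; lia.
Qed.

Lemma relievedE j : 0 < j -> rel j = rel (j.-1 %% (N + D)).+1.
Proof.
have D_gt0 := backups_gt0.
elim/ltn_ind: j => j IH j_gt0; case: (ltnP (N + D) j) => [lt_j|le_j].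
  rewrite relieved_periodic // IH; [|lia|lia].
  have -> : j.-1 = (j - (N + D)).-1 + (N + D) by lia.
  by rewrite modnDr.
by rewrite modn_small; [congr rel; lia | lia].
Qed.

Lemma relieved_eq_u0 j (i : 'I_N) :
  0 < j -> (rel j == u0 i) = (j.-1 %% (N + D) == i).
Proof.
move=> j_gt0; have D_gt0 := backups_gt0; rewrite relievedE //.
have r_lt : j.-1 %% (N + D) < N + D by rewrite ltn_mod; lia.
case: (ltnP (j.-1 %% (N + D)) N) => [r_lt_N|r_ge_N].
  by rewrite (relieved_initial (Ordinal r_lt_N)) (inj_eq u0_inj).
have -> : (j.-1 %% (N + D) == i) = false by apply/eqP; have := ltn_ord i; lia.
have r_fresh := relieved_fresh (j := (j.-1 %% (N + D)).+1) ltac:(lia).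
by apply: (contraNF _ r_fresh) => /eqP ->; exact: codom_f.
Qed.

Lemma relieved_round (i : 'I_N) K : rel (i.+1 + K * (N + D)) = u0 i.
Proof.
apply/eqP; rewrite relieved_eq_u0 // addSn /= addnC modnMDl modn_small //.
by have := ltn_ord i; lia.
Qed.

Lemma nb_relief_round (i : 'I_N) K :
  nb_relief u0 b loc (u0 i) (i.+1 + K * (N + D)) = K.+1.
Proof.
rewrite /nb_relief big_add1 /=.
rewrite (eq_big_nat _ _ (F2 := fun j => (j %% (N + D) == i) : nat)) => [|j _].
  by rewrite sum_eq_modn //; have := ltn_ord i; lia.
by rewrite relieved_eq_u0.
Qed.

End HoRRSchedule.

Local Open Scope ring_scope.

Lemma xstep_gt0 (R : archiRealFieldType) (N : nat) (f g : R) :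
  (0 < N)%N -> 2 * g < f -> 0 < xstep N f g.
Proof. by move=> N_gt0 lt_2gf; rewrite divr_gt0 ?subr_gt0 ?ltr0n. Qed.

Lemma recharge_ratioE (R : archiRealFieldType) (N : nat) (f g c : R) :
  (2 * g + c) / xstep N f g = (c + 2 * g) / (f - 2 * g) * N%:R.
Proof. by rewrite /xstep invf_div mulrA [2 * g + c]addrC -!mulrA [N%:R * _]mulrC. Qed.

Theorem lemma1 (R : archiRealFieldType) (N M : nat) (f g c : R)
    (u0 : 'I_N -> 'I_M) (b : nat -> 'I_M) (loc : nat -> 'I_N) :
  (0 < N)%N -> 0 < g -> 0 <= c -> 2 * g < f ->
  M%:Z = N%:Z + Num.ceil ((c + 2 * g) / (f - 2 * g) * N%:R) ->
  HoRR_run f g c u0 b loc ->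
  (forall i : 'I_N, relieved u0 b loc i.+1 = u0 i) ->
  forall (i : 'I_N) (k T : nat), (1 <= k)%N ->
    T%:Z = (i.+1)%:Z + ((k - 1) * N)%:Z
           + (k - 1)%:Z * Num.ceil ((2 * g + c) / xstep N f g) ->
    relieved u0 b loc T = u0 i /\ nb_relief u0 b loc (u0 i) T = k.
Proof.
move=> N_gt0 g_gt0 c_ge0 lt_2gf M_eq run relieved_initial i k T k_gt0 T_eq.
have x_gt0 := xstep_gt0 N_gt0 lt_2gf.
have ceil_ratio_ge0 : 0 <= Num.ceil ((2 * g + c) / xstep N f g).
  by rewrite ceil_ge0 (lt_le_trans (ltrN10 _)) // divr_ge0 ?ltW //; lra.
have [D D_eq] : exists D : nat, Num.ceil ((2 * g + c) / xstep N f g) = D%:Z.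
  by exists `|Num.ceil ((2 * g + c) / xstep N f g)|%N; rewrite gez0_abs.
rewrite -recharge_ratioE D_eq in M_eq; rewrite D_eq in T_eq.
have M_ND : M = (N + D)%N by apply/eqP; rewrite -eqz_nat M_eq.
have [K k_eq] : exists K, k = K.+1 by exists k.-1; lia.
have -> : T = (i.+1 + K * (N + D))%N.
  by apply/eqP; rewrite -eqz_nat T_eq k_eq subn1 /= mulnDr !PoszD PoszM addrA.
subst M k; split.
  exact: relieved_round run g_gt0 c_ge0 x_gt0 relieved_initial i K.
exact: nb_relief_round run g_gt0 c_ge0 x_gt0 relieved_initial i K.
Qed.
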